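(* Assume the setting and hypotheses of the previous statement (the orthogonality conditions on $\hat f_v,\hat g_w$ for $x\ge1$), together with the cone setting of the context, and assume moreover that $\Phi_{v,w}(e^{v,w}_0)\in C_{v,w}$ and $\hat\Phi^*_{v,w}(e^{v,w}_0)\in C^*_{v,w}$ for all $(v,w)\in E$, with $\langle \Phi_{v,w}(e^{v,w}_0),u^*_{v,w}\rangle>0$ and $\langle u_{v,w},\hat\Phi^*_{v,w}(e^{v,w}_0)\rangle>0$. Write $\Phi_{v,w}(e^{v,w}_0)=c_{v,w}m_{v\to w}$ and $\hat\Phi^*_{v,w}(e^{v,w}_0)=\hat c_{v,w}m_{w\to v}$ with $c_{v,w},\hat c_{v,w}>0$, $m_{v\to w}\in C_{v,w}$, $m_{w\to v}\in C^*_{v,w}$, $\langle m_{v\to w},u^*_{v,w}\rangle=1$, $\langle u_{v,w},m_{w\to v}\rangle=1$. Then: (i) $c_{v,w}\hat c_{v,w}\langle m_{v\to w},m_{w\to v}\rangle_{\mathcal{V}_{v,w}}=1$ for every edge; (ii) for every $(v,w)\in E$, $$\Big\langle f_v,\bigotimes_{w'\in\partial v\setminus\{w\}}m_{w'\to v}\Big\rangle_{\mathcal{V}_{\partial v\setminus w}}=\frac{\alpha_v c_{v,w}}{\prod_{w'\in\partial v\setminus\{w\}}\hat c_{v,w'}}\,m_{v\to w},\qquad \Big\langle\bigotimes_{v'\in\partial w\setminus\{v\}}m_{v'\to w},g_w\Big\rangle_{\mathcal{V}_{\partial w\setminus v}}=\frac{\hat\alpha_w\hat c_{v,w}}{\prod_{v'\in\partial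 w\setminus\{v\}}c_{v',w}}\,m_{w\to v},$$ so that (whenever $\alpha_v,\hat\alpha_w>0$) the messages $(m_{v\to w},m_{w\to v})_{(v,w)\in E}$ form a fixed point of belief propagation; (iii) the term of the all-zero assignment in the expansion of $\langle\bigotimes_v\hat f_v,\bigotimes_w\hat g_w\rangle_{\mathcal V}$ with respect to the bases $(e^{v,w}_x)$, namely $\prod_{v\in V}\alpha_v\prod_{w\in W}\hat\alpha_w$, equals $$\prod_{v\in V}\Big\langle f_v,\bigotimes_{w\in\partial v}m_{w\to v}\Big\rangle_{\mathcal{V}_{\partial v}}\prod_{w\in W}\Big\langle\bigotimes_{v\in\partial w}m_{v\to w},g_w\Big\rangle_{\mathcal{V}_{\partial w}}\prod_{(v,w)\in E}\frac{1}{\langle m_{v\to w},m_{w\to v}\rangle_{\mathcal{V}_{v,w}}}.$$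
   Context: Bipartite graph $(V,W,E\subseteq V\times W)$, $\partial v=\{w:(v,w)\in E\}$, $\partial w=\{v:(v,w)\in E\}$. For each edge, $\mathcal{V}_{v,w}$ is a real inner product space of dimension $q_{v,w}$ with orthonormal basis $(e^{v,w}_x)_{x=0,\dots,q_{v,w}-1}$; tensor products carry the product inner product. $\mathcal{V}_{\partial v}=\bigotimes_{w\in\partial v}\mathcal{V}_{v,w}$, $\mathcal{V}_{\partial w}=\bigotimes_{v\in\partial w}\mathcal{V}_{v,w}$, $\mathcal{V}_{\partial v\setminus w}$, $\mathcal{V}_{\partial w\setminus v}$ the tensor products over the neighbours other than $w$ (resp. $v$). $f_v\in\mathcal{V}_{\partial v}$, $g_w\in\mathcal{V}_{\partial w}$. $\Phi_{v,w}$ invertible on $\mathcal{V}_{v,w}$, $\hat\Phi_{v,w}=\Phi_{v,w}^{-1}$, $A^*$ is the adjoint with respect to the inner product; $\hat f_v=(\bigotimes_{w\in\partial v}\hat\Phi_{v,w})(f_v)$, $\hat g_w=(\bigotimes_{v\in\partial w}\Phi^*_{v,w})(g_w)$; $\alpha_v=\langle\hat f_v,\bigotimes_{w\in\partial v}e^{v,w}_0\rangle$, $\hat\alpha_w=\langle\bigotimes_{v\in\partial w}e^{v,w}_0,\hat g_w\rangle$. The hypotheses of the previous statement are: $\langle\hat f_v,e^{v,w}_x\otimes\bigotimes_{w'\in\partial v\setminus\{w\}}e^{v,w'}_0\rangle=0$ and $\langle e^{v,w}_x\otimes\bigotimes_{v'\in\partial w\setminus\{v\}}e^{v',w}_0,\hat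 g_w\rangle=0$ for all edges and $x\in\{1,\dots,q_{v,w}-1\}$. Partial inner product: for $f\in\mathcal V\otimes\mathcal W$, $g\in\mathcal V$, $\langle f,g\rangle_{\mathcal V}\in\mathcal W$ is determined by $\langle\langle f,g\rangle_{\mathcal V},h\rangle=\langle f,g\otimes h\rangle$ for all $h\in\mathcal W$. Cones: $C_{v,w}\subseteq\mathcal{V}_{v,w}$ closed convex cones, $C^*$ the dual cone $\{f:\langle f,g\rangle\ge0\ \forall g\in C\}$; $u_{v,w}$ and $u^*_{v,w}$ are fixed vectors in the interiors of $C_{v,w}$ and $C^*_{v,w}$. A belief propagation fixed point is a family $m_{v\to w}\in C_{v,w}$, $m_{w\to v}\in C^*_{v,w}$ with $\langle m_{v\to w},u^*_{v,w}\rangle=1=\langle u_{v,w},m_{w\to v}\rangle$ such that $m_{v\to w}$ is a strictly positive multiple of $\langle f_v,\bigotimes_{w'\in\partial v\setminus\{w\}}m_{w'\to v}\rangle$ and $m_{w\to v}$ is a strictly positive multiple of $\langle\bigotimes_{v'\in\partial w\setminus\{v\}}m_{v'\to w},g_w\rangle$. *)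

From HB Require Import structures.
From mathcomp Require Import all_boot all_order all_algebra.
Set Implicit Arguments.
Unset Strict Implicit.
Unset Printing Implicit Defensive.
Import Order.TTheory GRing.Theory Num.Theory.
Local Open Scope ring_scope.

(* For an edge (v,w) the space V_{v,w} is represented in the coordinates of its
   orthonormal basis (e_x)_{x < q_{v,w}}, i.e. as 'cV[R]_(q_{v,w}) with the standard
   inner product; we write q_{v,w} = (d v w).+1 (q_{v,w} >= 1 since e_0 exists). *)

Notation nbV E v := {w | (v, w) \in E}.
Notation nbW E w := {v | (v, w) \in E}.

(* basis configurations of V_{dv} = (x) _{w in dv} V_{v,w}, and of V_{dw} *)
Notation cfgV E d v := {dffun forall w : nbV E v, 'I_((d v (val w)).+1)}.
Notation cfgW E d w := {dffun forall v : nbW E w, 'I_((d (val v) w).+1)}.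

Definition dot (R : ringType) (n : nat) (a b : 'cV[R]_n) : R :=
  \sum_(i < n) a i 0 * b i 0.

Definition e0 (R : ringType) (n : nat) : 'cV[R]_n.+1 := delta_mx 0 0.

Definition cfgV0 (V W : finType) (E : {set V * W}) (d : V -> W -> nat) (v : V)
  : cfgV E d v := [ffun w => ord0].
Definition cfgW0 (V W : finType) (E : {set V * W}) (d : V -> W -> nat) (w : W)
  : cfgW E d w := [ffun v => ord0].

(* hat f_v = (x)_{w in dv} Phi_{v,w}^{-1} (f_v), in coordinates *)
Definition hatV (R : realFieldType) (V W : finType) (E : {set V * W})
  (d : V -> W -> nat) (Phi : forall v w, 'M[R]_((d v w).+1)) (v : V)
  (f : cfgV E d v -> R) (y : cfgV E d v) : R :=
  \sum_(x : cfgV E d v)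
     (\prod_(w : nbV E v) invmx (Phi v (val w)) (y w) (x w)) * f x.

(* hat g_w = (x)_{v in dw} Phi_{v,w}^* (g_w), in coordinates (adjoint = transpose) *)
Definition hatW (R : realFieldType) (V W : finType) (E : {set V * W})
  (d : V -> W -> nat) (Phi : forall v w, 'M[R]_((d v w).+1)) (w : W)
  (g : cfgW E d w -> R) (y : cfgW E d w) : R :=
  \sum_(x : cfgW E d w)
     (\prod_(v : nbW E w) (Phi (val v) w)^T (y v) (x v)) * g x.

(* partial inner product < f_v , (x)_{w' in dv \ w} m_{w' -> v} >_{V_{dv \ w}},
   an element of V_{v,w}; mWV v w is the message m_{w -> v} *)
Definition contrV (R : realFieldType) (V W : finType) (E : {set V * W})
  (d : V -> W -> nat) (v : V) (f : cfgV E d v -> R)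
  (mWV : forall v w, 'cV[R]_((d v w).+1)) (wv : nbV E v) : 'cV[R]_((d v (val wv)).+1) :=
  \col_(x < (d v (val wv)).+1)
     \sum_(y : cfgV E d v | y wv == x)
        f y * \prod_(w' : nbV E v | w' != wv) mWV v (val w') (y w') 0.

Definition contrW (R : realFieldType) (V W : finType) (E : {set V * W})
  (d : V -> W -> nat) (w : W) (g : cfgW E d w -> R)
  (mVW : forall v w, 'cV[R]_((d v w).+1)) (vw : nbW E w) : 'cV[R]_((d (val vw) w).+1) :=
  \col_(x < (d (val vw) w).+1)
     \sum_(y : cfgW E d w | y vw == x)
        (\prod_(v' : nbW E w | v' != vw) mVW (val v') w (y v') 0) * g y.

Definition fullV (R : realFieldType) (V W : finType) (E : {set V * W})
  (d : V -> W -> nat) (v : V) (f : cfgV E d v -> R)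
  (mWV : forall v w, 'cV[R]_((d v w).+1)) : R :=
  \sum_(y : cfgV E d v) f y * \prod_(w : nbV E v) mWV v (val w) (y w) 0.

Definition fullW (R : realFieldType) (V W : finType) (E : {set V * W})
  (d : V -> W -> nat) (w : W) (g : cfgW E d w -> R)
  (mVW : forall v w, 'cV[R]_((d v w).+1)) : R :=
  \sum_(y : cfgW E d w) (\prod_(v : nbW E w) mVW (val v) w (y v) 0) * g y.

(* Cones in V_{v,w} = R^n (topology of the max-norm, i.e. the usual one) *)
Definition is_closed_set (R : realFieldType) (n : nat) (C : 'cV[R]_n -> Prop) :=
  forall x : 'cV[R]_n,
    (forall eps : R, 0 < eps -> exists2 y : 'cV[R]_n, C y & forall i, `|x i 0 - y i 0| < eps) ->
    C x.

Definition is_closed_convex_cone (R : realFieldType) (n : nat) (C : 'cV[R]_n -> Prop) :=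
  [/\ exists x, C x,
      forall x y, C x -> C y -> C (x + y),
      forall (a : R) x, 0 <= a -> C x -> C (a *: x)
    & is_closed_set C].

Definition dual_cone (R : realFieldType) (n : nat) (C : 'cV[R]_n -> Prop) :
  'cV[R]_n -> Prop := fun f => forall g, C g -> 0 <= dot f g.

Definition in_interior (R : realFieldType) (n : nat) (C : 'cV[R]_n -> Prop)
  (x : 'cV[R]_n) :=
  exists2 eps : R, 0 < eps & forall y : 'cV[R]_n, (forall i, `|y i 0 - x i 0| < eps) -> C y.

Definition BP_fixed_point (R : realFieldType) (V W : finType) (E : {set V * W})
  (d : V -> W -> nat)
  (C : forall v w, 'cV[R]_((d v w).+1) -> Prop)
  (u uS : forall v w, 'cV[R]_((d v w).+1))
  (f : forall v, cfgV E d v -> R) (g : forall w, cfgW E d w -> R)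
  (mVW mWV : forall v w, 'cV[R]_((d v w).+1)) : Prop :=
  (forall v w, (v, w) \in E ->
     [/\ C v w (mVW v w), dual_cone (C v w) (mWV v w),
         dot (mVW v w) (uS v w) = 1 & dot (u v w) (mWV v w) = 1]) /\
  (forall v (wv : nbV E v),
     exists2 k : R, 0 < k & mVW v (val wv) = k *: contrV (f v) mWV wv) /\
  (forall w (vw : nbW E w),
     exists2 k : R, 0 < k & mWV (val vw) w = k *: contrW (g w) mVW vw).

From mathcomp Require Import all_boot all_order all_algebra.
From mathcomp Require Import ring.
Import Order.TTheory GRing.Theory Num.Theory.
Set Implicit Arguments.
Unset Strict Implicit.
Unset Printing Implicit Defensive.
Local Open Scope ring_scope.

(* Each message is a rescaled first column: m_{v->w} = Phi_{v,w} e_0 / c_{v,w} and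
   m_{w->v} = Phi_{v,w}^{-T} e_0 / ch_{v,w}, so <m_{v->w}, m_{w->v}> is the (0,0) entry of
   Phi^{-1} Phi divided by c ch, which is (i).  Contracting f_v against the rows
   e_0^T Phi_{v,w'}^{-1} (w' <> w) and then applying Phi_{v,w}^{-1} produces the column
   x |-> hat f_v at the configuration that is x at w and 0 elsewhere; the orthogonality
   hypothesis collapses it to alpha_v e_0, and applying Phi_{v,w} back gives (ii).  The same
   computation for the full contractions gives alpha_v / prod ch and hat alpha_w / prod c,
   and taking the product over all vertices every edge contributes c ch = <m, m>^{-1},
   which is (iii). *)


Lemma mulmx_e0 (R : nzRingType) m n (M : 'M[R]_(m, n.+1)) i : (M *m e0 R n) i 0 = M i 0.
Proof.
rewrite mxE (bigD1 ord0) //= mxE eqxx mulr1 big1 ?addr0 // => j nj0.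
by rewrite mxE (negbTE nj0) mulr0.
Qed.

Lemma dotZ (R : comNzRingType) n (a b : R) (x y : 'cV[R]_n) :
  dot (a *: x) (b *: y) = a * b * dot x y.
Proof.
rewrite /dot mulr_sumr; apply: eq_bigr => i _; rewrite !mxE; ring.
Qed.

Lemma dot_col0_invmx (R : comUnitRingType) n (M : 'M[R]_n.+1) :
  M \in unitmx -> dot (M *m e0 R n) ((invmx M)^T *m e0 R n) = 1.
Proof.
move=> Mu; transitivity ((invmx M *m M) 0 0); last by rewrite mulVmx // mxE eqxx.
rewrite mxE /dot; apply: eq_bigr => i _; by rewrite !mulmx_e0 mxE mulrC.
Qed.

Lemma col_of_e0_scaled (R : fieldType) n (M : 'M[R]_n.+1) (k : R) (m : 'cV[R]_n.+1) :
  k != 0 -> M *m e0 R n = k *: m -> forall i, m i 0 = M i 0 / k.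
Proof.
by move=> k0 Me0 i; rewrite -[M i 0]mulmx_e0 Me0 mxE mulrC mulKf.
Qed.

Section TensorTransform.
Variables (R : fieldType) (I : finType) (n : I -> nat).
Local Notation cfg := {dffun forall i : I, 'I_(n i).+1}.

Definition tensor_transform (A : forall i, 'M[R]_((n i).+1)) (F : cfg -> R) (y : cfg) : R :=
  \sum_(x : cfg) (\prod_i A i (y i) (x i)) * F x.

Definition partial_contract (F : cfg -> R) (r : forall i, 'I_(n i).+1 -> R) (i0 : I)
  : 'cV[R]_((n i0).+1) :=
  \col_(k < (n i0).+1) \sum_(y : cfg | y i0 == k) F y * \prod_(i | i != i0) r i (y i).

Definition cfg_single (i0 : I) (k : 'I_(n i0).+1) : cfg :=
  [ffun i => if i == i0 then inord k else ord0].
Arguments cfg_single : clear implicits.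

Variables (A : forall i, 'M[R]_((n i).+1)) (F : cfg -> R) (i0 : I).

Lemma mulmx_partial_contract_rows k :
  (A i0 *m partial_contract F (fun i => A i 0) i0) k 0 = tensor_transform A F (cfg_single i0 k).
Proof.
rewrite mxE /tensor_transform (partition_big (fun y : cfg => y i0) xpredT) //=.
apply: eq_bigr => j _; rewrite mxE big_distrr; apply: eq_big => // y /eqP yj.
rewrite [in RHS](bigD1 i0) //= /cfg_single ffunE eqxx inord_val yj mulrCA [in RHS]mulrC.
by congr (_ * (_ * _)); apply: eq_bigr => i ni0; rewrite ffunE (negbTE ni0).
Qed.

Lemma partial_contract_rows (B : 'M[R]_((n i0).+1)) :
  B *m A i0 = 1 ->
  (forall k, k != ord0 -> tensor_transform A F (cfg_single i0 k) = 0) ->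
  partial_contract F (fun i => A i 0) i0 = tensor_transform A F [ffun => ord0] *: (B *m e0 _ _).
Proof.
move=> BA transform_excited0.
have Ac : A i0 *m partial_contract F (fun i => A i 0) i0 =
          tensor_transform A F [ffun => ord0] *: e0 _ _.
  apply/matrixP => k j; rewrite (ord1 j) mulmx_partial_contract_rows !mxE.
  have [->|k0] := eqVneq k ord0; last by rewrite transform_excited0 // mulr0.
  rewrite mulr1; congr tensor_transform; apply/ffunP => i; rewrite !ffunE.
  by case: eqP => // ->; apply/val_inj; rewrite /= inordK.
by rewrite -[LHS]mul1mx -(BA : B *m A i0 = 1%:M) -mulmxA Ac scalemxAr.
Qed.

Lemma partial_contract_scaled (B : 'M[R]_((n i0).+1))
    (m : forall i, 'I_(n i).+1 -> R) (s : I -> R) :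
  B *m A i0 = 1 ->
  (forall k, k != ord0 -> tensor_transform A F (cfg_single i0 k) = 0) ->
  (forall i k, m i k = A i 0 k / s i) ->
  partial_contract F m i0 =
  (tensor_transform A F [ffun => ord0] / \prod_(i | i != i0) s i) *: (B *m e0 _ _).
Proof.
move=> BA excited0 mE.
rewrite mulrC -scalerA -partial_contract_rows //.
apply/matrixP => k j; rewrite !mxE mulr_sumr; apply: eq_bigr => y _.
by rewrite (eq_bigr _ (fun i _ => mE i (y i))) big_split prodfV /=; ring.
Qed.

Lemma full_contract_scaled (m : forall i, 'I_(n i).+1 -> R) (s : I -> R) :
  (forall i k, m i k = A i 0 k / s i) ->
  \sum_(y : cfg) F y * \prod_i m i (y i) =
  tensor_transform A F [ffun => ord0] / \prod_i s i.
Proof.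
move=> mE; rewrite /tensor_transform mulr_suml; apply: eq_bigr => y _.
rewrite (eq_bigr _ (fun i _ => mE i (y i))) big_split prodfV /=.
rewrite [in RHS](eq_bigr (fun i => A i 0 (y i))) => [|i _]; last by rewrite ffunE.
ring.
Qed.

End TensorTransform.
Arguments cfg_single {I n} i0 k.

Section PairBig.
Variables (T : Type) (idx : T) (op : Monoid.com_law idx).
Variables (V W : finType) (E : {set V * W}) (G : V -> W -> T).

Lemma big_nbV : \big[op/idx]_(v : V) \big[op/idx]_(w : nbV E v) G v (val w) =
                \big[op/idx]_(e in E) G e.1 e.2.
Proof.
under eq_bigr => v _ do rewrite -(big_sub [pred w | (v, w) \in E] (G v)).
by rewrite pair_big_dep; apply: eq_bigl => -[].
Qed.

Lemma big_nbW : \big[op/idx]_(w : W) \big[op/idx]_(v : nbW E w) G (val v) w =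
                \big[op/idx]_(e in E) G e.1 e.2.
Proof.
under eq_bigr => w _ do rewrite -(big_sub [pred v | (v, w) \in E] (G^~ w)).
by rewrite (exchange_big_dep xpredT) //= pair_big_dep; apply: eq_bigl => -[].
Qed.

End PairBig.

Section BeliefPropagation.
Variables (R : realFieldType) (V W : finType) (E : {set V * W}) (d : V -> W -> nat).
Variables (Phi : forall v w, 'M[R]_((d v w).+1)) (c ch : V -> W -> R).
Variables (mVW mWV : forall v w, 'cV[R]_((d v w).+1)).
Hypothesis Phi_unit : forall v w, (v, w) \in E -> Phi v w \in unitmx.
Hypothesis messagesE : forall v w, (v, w) \in E ->
  [/\ 0 < c v w, 0 < ch v w,
      Phi v w *m e0 _ _ = c v w *: mVW v w
    & (invmx (Phi v w))^T *m e0 _ _ = ch v w *: mWV v w].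

Lemma c_gt0 v w : (v, w) \in E -> 0 < c v w.
Proof. by case/messagesE. Qed.

Lemma ch_gt0 v w : (v, w) \in E -> 0 < ch v w.
Proof. by case/messagesE. Qed.

Lemma mVW_coord v w k : (v, w) \in E -> mVW v w k 0 = (Phi v w)^T 0 k / c v w.
Proof.
case/messagesE => c_pos _ Phi_e0 _.
by rewrite mxE; apply: col_of_e0_scaled Phi_e0 k; apply: lt0r_neq0.
Qed.

Lemma mWV_coord v w k : (v, w) \in E -> mWV v w k 0 = invmx (Phi v w) 0 k / ch v w.
Proof.
case/messagesE => _ ch_pos _ Phih_e0.
rewrite (col_of_e0_scaled _ Phih_e0) ?mxE //; exact: lt0r_neq0.
Qed.

Lemma edge_normalisation v w :
  (v, w) \in E -> c v w * ch v w * dot (mVW v w) (mWV v w) = 1.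
Proof.
move=> vw; case: (messagesE vw) => _ _ Phi_e0 Phih_e0.
by rewrite -dotZ -Phi_e0 -Phih_e0 dot_col0_invmx ?Phi_unit.
Qed.

Variables (f : forall v, cfgV E d v -> R) (g : forall w, cfgW E d w -> R).
Arguments f : clear implicits.
Arguments g : clear implicits.
Hypothesis hatf_excited0 : forall v (wv : nbV E v) (y : cfgV E d v),
  (forall w' : nbV E v, w' != wv -> y w' = ord0) -> y wv != ord0 ->
  hatV Phi (f v) y = 0.
Hypothesis hatg_excited0 : forall w (vw : nbW E w) (y : cfgW E d w),
  (forall v' : nbW E w, v' != vw -> y v' = ord0) -> y vw != ord0 ->
  hatW Phi (g w) y = 0.

Lemma contrV_eq v (wv : nbV E v) :
  contrV (f v) mWV wv =
  (hatV Phi (f v) (cfgV0 E d v) * c v (val wv) /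
     \prod_(w' : nbV E v | w' != wv) ch v (val w')) *: mVW v (val wv).
Proof.
have [_ _ Phi_e0 _] := messagesE (valP wv).
have -> : contrV (f v) mWV wv =
          partial_contract (f v) (fun w k => mWV v (val w) k 0) wv by [].
rewrite (partial_contract_scaled (A := fun w => invmx (Phi v (val w)))
           (B := Phi v (val wv)) (s := fun w => ch v (val w))).
- by rewrite Phi_e0 scalerA mulrAC.
- exact: mulmxV (Phi_unit (valP wv)).
- move=> k k0; apply: (hatf_excited0 (wv := wv) (y := cfg_single wv k)) => [w' w'wv|].
    by rewrite ffunE (negbTE w'wv).
  by rewrite ffunE eqxx inord_val.
- by move=> w' k; apply: mWV_coord (valP w').
Qed.

Lemma contrW_eq w (vw : nbW E w) :
  contrW (g w) mVW vw =
  (hatW Phi (g w) (cfgW0 E d w) * ch (val vw) w /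
     \prod_(v' : nbW E w | v' != vw) c (val v') w) *: mWV (val vw) w.
Proof.
have [_ _ _ Phih_e0] := messagesE (valP vw).
have -> : contrW (g w) mVW vw =
          partial_contract (g w) (fun v k => mVW (val v) w k 0) vw.
  by apply/matrixP => k j; rewrite !mxE; apply: eq_bigr => y _; rewrite mulrC.
rewrite (partial_contract_scaled (A := fun v => (Phi (val v) w)^T)
           (B := (invmx (Phi (val vw) w))^T) (s := fun v => c (val v) w)).
- by rewrite Phih_e0 scalerA mulrAC.
- by rewrite -trmx_mul mulmxV ?trmx1 ?Phi_unit ?(valP vw).
- move=> k k0; apply: (hatg_excited0 (vw := vw) (y := cfg_single vw k)) => [v' v'vw|].
    by rewrite ffunE (negbTE v'vw).
  by rewrite ffunE eqxx inord_val.
- by move=> v' k; apply: mVW_coord (valP v').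
Qed.

Lemma fullV_eq v :
  fullV (f v) mWV = hatV Phi (f v) (cfgV0 E d v) / \prod_(w : nbV E v) ch v (val w).
Proof.
apply: (full_contract_scaled (f v) (m := fun w k => mWV v (val w) k 0)) => w k.
exact: mWV_coord (valP w).
Qed.

Lemma fullW_eq w :
  fullW (g w) mVW = hatW Phi (g w) (cfgW0 E d w) / \prod_(v : nbW E w) c (val v) w.
Proof.
rewrite -(full_contract_scaled (g w) (m := fun v k => mVW (val v) w k 0)) => [|v k].
  by apply: eq_bigr => y _; rewrite mulrC.
exact: mVW_coord (valP v).
Qed.

Lemma messages_BP_fixed_point (C : forall v w, 'cV[R]_((d v w).+1) -> Prop)
    (u uS : forall v w, 'cV[R]_((d v w).+1)) :
  (forall v w, (v, w) \in E ->
     [/\ C v w (mVW v w), dual_cone (C v w) (mWV v w),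
         dot (mVW v w) (uS v w) = 1 & dot (u v w) (mWV v w) = 1]) ->
  (forall v, 0 < hatV Phi (f v) (cfgV0 E d v)) ->
  (forall w, 0 < hatW Phi (g w) (cfgW0 E d w)) ->
  BP_fixed_point C u uS f g mVW mWV.
Proof.
move=> normalised alpha_gt0 alphah_gt0.
have rescale n (x y : 'cV[R]_n) (k : R) :
    0 < k -> x = k *: y -> exists2 k', 0 < k' & y = k' *: x.
  by move=> k_gt0 ->; exists k^-1; rewrite ?invr_gt0 // scalerA mulVf ?scale1r ?lt0r_neq0.
split; first exact: normalised.
split=> [v wv | w vw].
  apply: rescale (contrV_eq wv); rewrite divr_gt0 ?mulr_gt0 ?c_gt0 ?(valP wv) //.
  by rewrite prodr_gt0 // => w _; rewrite ch_gt0 ?(valP w).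
apply: rescale (contrW_eq vw); rewrite divr_gt0 ?mulr_gt0 ?ch_gt0 ?(valP vw) //.
by rewrite prodr_gt0 // => v _; rewrite c_gt0 ?(valP v).
Qed.

Lemma all_zero_term_factorisation :
  \prod_(v : V) hatV Phi (f v) (cfgV0 E d v) * \prod_(w : W) hatW Phi (g w) (cfgW0 E d w) =
  \prod_(v : V) fullV (f v) mWV * \prod_(w : W) fullW (g w) mVW *
  \prod_(e in E) (dot (mVW e.1 e.2) (mWV e.1 e.2))^-1.
Proof.
have dotV : \prod_(e in E) (dot (mVW e.1 e.2) (mWV e.1 e.2))^-1 =
            \prod_(e in E) c e.1 e.2 * \prod_(e in E) ch e.1 e.2.
  rewrite -big_split; apply: eq_bigr => -[v w] vw /=.
  by apply: mulr1_eq; rewrite mulrC edge_normalisation.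
have prod_neq0 (h : V -> W -> R) : (forall v w, (v, w) \in E -> 0 < h v w) ->
    \prod_(e in E) h e.1 e.2 != 0.
  by move=> h_gt0; rewrite lt0r_neq0 // prodr_gt0 // => -[v w] /h_gt0.
rewrite dotV (eq_bigr _ (fun v _ => fullV_eq v)) (eq_bigr _ (fun w _ => fullW_eq w)).
rewrite !big_split /= !prodfV big_nbV big_nbW.
by field; rewrite !prod_neq0 //; [apply: ch_gt0 | apply: c_gt0].
Qed.

End BeliefPropagation.
Theorem mainTheorem4
  (R : realFieldType) (V W : finType) (E : {set V * W}) (d : V -> W -> nat)
  (f : forall v : V, cfgV E d v -> R) (g : forall w : W, cfgW E d w -> R)
  (Phi : forall v w, 'M[R]_((d v w).+1))
  (C : forall v w, 'cV[R]_((d v w).+1) -> Prop)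
  (u uS : forall v w, 'cV[R]_((d v w).+1))
  (c ch : V -> W -> R)
  (mVW mWV : forall v w, 'cV[R]_((d v w).+1))
  (* Phi_{v,w} invertible *)
  (HPhi : forall v w, (v, w) \in E -> Phi v w \in unitmx)
  (* hypotheses of the previous statement *)
  (Hf : forall v (wv : nbV E v) (y : cfgV E d v),
      (forall w' : nbV E v, w' != wv -> y w' = ord0) -> y wv != ord0 ->
      hatV Phi (f v) y = 0)
  (Hg : forall w (vw : nbW E w) (y : cfgW E d w),
      (forall v' : nbW E w, v' != vw -> y v' = ord0) -> y vw != ord0 ->
      hatW Phi (g w) y = 0)
  (* cone setting *)
  (HC : forall v w, (v, w) \in E -> is_closed_convex_cone (C v w))
  (Hu : forall v w, (v, w) \in E -> in_interior (C v w) (u v w))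
  (HuS : forall v w, (v, w) \in E -> in_interior (dual_cone (C v w)) (uS v w))
  (* additional assumptions *)
  (HPhiC : forall v w, (v, w) \in E -> C v w (Phi v w *m e0 _ _))
  (HPhihC : forall v w, (v, w) \in E ->
      dual_cone (C v w) ((invmx (Phi v w))^T *m e0 _ _))
  (Hpos : forall v w, (v, w) \in E -> 0 < dot (Phi v w *m e0 _ _) (uS v w))
  (Hposh : forall v w, (v, w) \in E ->
      0 < dot (u v w) ((invmx (Phi v w))^T *m e0 _ _))
  (* the decompositions Phi(e_0) = c m_{v->w}, hat Phi^*(e_0) = hat c m_{w->v} *)
  (Hc : forall v w, (v, w) \in E ->
      [/\ 0 < c v w, 0 < ch v w,
          Phi v w *m e0 _ _ = c v w *: mVW v w
        & (invmx (Phi v w))^T *m e0 _ _ = ch v w *: mWV v w])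
  (Hm : forall v w, (v, w) \in E ->
      [/\ C v w (mVW v w), dual_cone (C v w) (mWV v w),
          dot (mVW v w) (uS v w) = 1 & dot (u v w) (mWV v w) = 1]) :
  let alpha := fun v : V => hatV Phi (f v) (cfgV0 E d v) in
  let alphah := fun w : W => hatW Phi (g w) (cfgW0 E d w) in
  (* (i) *)
  (forall v w, (v, w) \in E -> c v w * ch v w * dot (mVW v w) (mWV v w) = 1) /\
  (* (ii) *)
  (forall v (wv : nbV E v),
      contrV (f v) mWV wv =
      (alpha v * c v (val wv) / \prod_(w' : nbV E v | w' != wv) ch v (val w'))
        *: mVW v (val wv)) /\
  (forall w (vw : nbW E w),
      contrW (g w) mVW vw =
      (alphah w * ch (val vw) w / \prod_(v' : nbW E w | v' != vw) c (val v') w)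
        *: mWV (val vw) w) /\
  ((forall v, 0 < alpha v) -> (forall w, 0 < alphah w) ->
      BP_fixed_point C u uS f g mVW mWV) /\
  (* (iii) *)
  (\prod_(v : V) alpha v * \prod_(w : W) alphah w =
   \prod_(v : V) fullV (f v) mWV * \prod_(w : W) fullW (g w) mVW *
   \prod_(e in E) (dot (mVW e.1 e.2) (mWV e.1 e.2))^-1).
Proof.
move=> alpha alphah.
split; first exact: edge_normalisation HPhi Hc.
split; first exact: (contrV_eq HPhi Hc (f := f) Hf).
split; first exact: (contrW_eq HPhi Hc (g := g) Hg).
split; first exact: (messages_BP_fixed_point HPhi Hc (f := f) (g := g) Hf Hg Hm).
exact: all_zero_term_factorisation HPhi Hc f g.
Qed.
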